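(* Let $G$ be a $\mathbb{Z}$-weighted complete graph with $n\ge2$ vertices such that $$s\Big(\{G\}*\Big\{I\big(K_2\sqcup\textstyle\bigsqcup_{i=1}^{n-2}K_1\big)\Big\}\Big)=\{1,2,\dots,k\}$$ for some $k\ge1$ (equivalently, the set of edge weights of $G$ is exactly $\{1,\dots,k\}$). Let $l$ be the unique element of $s(\{I(K_n)\}*\{G\})$ (i.e. $l=s(G)$). Then $$\bigcup_{H} s(\{I(H)\}*\{G\})=\{0,1,\dots,l\},$$ where $H$ ranges over all simple graphs on a fixed $n$-element vertex set (spanning subgraphs of $K_n$).
   Context: Here $R=\mathbb{Z}$. An $R$-weighted complete graph $K$ is a finite vertex set with a weight $v_K(e)\in R$ on every 2-subset $e$. For such $H,G'$ with equal vertex counts and a bijection $f:V(H)\to V(G')$, $H*_fG'$ has vertex set $V(H)$ and weights $v_H(\{x,y\})v_{G'}(\{f(x),f(y)\})$; $H*G'=\{H*_fG': f \text{ bijection}\}$. $s(K)=\sum_e v_K(e)$, $s(\mathscr K)=\{s(K):K\in\mathscr K\}$. For a simple graph $H$, $I(H)$ has weight $1$ on edges and $0$ on non-edges. $K_2\sqcup\bigsqcup_{i=1}^{n-2}K_1$ is the graph on $n$ vertices with exactly one edge. *)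

From HB Require Import structures.
From mathcomp Require Import all_boot all_order fingroup perm all_algebra.
Set Implicit Arguments. Unset Strict Implicit. Unset Printing Implicit Defensive.
Import GRing.Theory Num.Theory.
Local Open Scope ring_scope.

(* A Z-weighted complete graph on the vertex set 'I_n: a weight on every
   subset of vertices; only the values on 2-subsets are meaningful. *)
Definition wgraph (n : nat) := {set 'I_n} -> int.

Definition twosets (n : nat) : {set {set 'I_n}} := [set e : {set 'I_n} | #|e| == 2%N].

Definition wsum n (K : wgraph n) : int := \sum_(e in twosets n) K e.

Definition wprod n (H G : wgraph n) (f : {perm 'I_n}) : wgraph n :=
  fun e => H e * G (f @: e).

Definition sprod n (H G : wgraph n) : int -> Prop :=
  fun z => exists f : {perm 'I_n}, z = wsum (wprod H G f).

Definition Igraph n (E : {set {set 'I_n}}) : wgraph n := fun e => (e \in E)%:Z.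

(* K_2 ⊔ K_1 ⊔ ... ⊔ K_1 on 'I_n (n >= 2): the single edge {0,1}. *)
Definition one_edge (n : nat) : {set {set 'I_n}} :=
  [set e in twosets n | [forall i in e, (val i < 2)%N]].

(* If the edge weights of G are exactly 1, ..., k, then every weight w > 1 is
   preceded by the weight w - 1, so each weight is at most one more than the
   total of the strictly smaller ones; by Brown's criterion the subset sums of
   the weights then fill the interval [0, s(G)].  On the other hand
   s(I(H) *_f G) is the sum of the weights of G over the image under f of the
   edges of H, i.e. a subset sum, and f = id realizes every subset sum. *)

From mathcomp Require Import all_boot all_order fingroup perm all_algebra.
From mathcomp Require Import zify ring.
Import Order.TTheory GRing.Theory Num.Theory.
Set Implicit Arguments. Unset Strict Implicit.
Local Open Scope ring_scope.

Section SubsetSums.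
Variables (T : finType) (w : T -> int).

Lemma sum_subset_le (A B : {set T}) :
  (forall e, e \in A -> 0 <= w e) -> B \subset A ->
  \sum_(e in B) w e <= \sum_(e in A) w e.
Proof.
move=> w_ge0 /setIidPr defB; rewrite [leRHS](big_setID B) defB lerDl.
by apply: sumr_ge0 => e /setDP[/w_ge0].
Qed.

Definition brown_condition (A : {set T}) :=
  forall e, e \in A -> w e <= 1 + \sum_(e' in A | w e' < w e) w e'.

Lemma brown_conditionD1 (A : {set T}) (m : T) :
  (forall e, e \in A -> w e <= w m) ->
  brown_condition A -> brown_condition (A :\ m).
Proof.
move=> m_max brownA e /setD1P[_ eA].
rewrite (eq_bigl (fun e' => (e' \in A) && (w e' < w e))); first exact: brownA.
move=> e'; rewrite !inE; case: eqP => [->|] //=.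
by rewrite ltNge m_max ?andbF.
Qed.

Lemma brown_subset_sums (A : {set T}) :
  (forall e, e \in A -> 0 <= w e) -> brown_condition A ->
  forall z, 0 <= z <= \sum_(e in A) w e ->
  exists2 B : {set T}, B \subset A & z = \sum_(e in B) w e.
Proof.
have [N] := ubnP #|A|; elim: N A => // N IH A cardA w_ge0 brownA z.
have [->|[e0 e0A]] := set_0Vmem A.
  by rewrite big_set0 => z0; exists set0; rewrite ?sub0set ?big_set0; lia.
have [m mA m_max] := @arg_maxP _ _ _ e0 (mem A) w e0A.
have {}mA : m \in A := mA.
have {}m_max : forall e, e \in A -> w e <= w m := m_max.
set A' := A :\ m.
have cardA' : (#|A'| < N)%N by rewrite (cardsD1 m A) mA in cardA.
have w_ge0' e : e \in A' -> 0 <= w e by case/setD1P => _ /w_ge0.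
have IH' := IH A' cardA' w_ge0' (brown_conditionD1 m_max brownA).
have sumA : \sum_(e in A) w e = w m + \sum_(e in A') w e by rewrite (big_setD1 m).
have gap_m : w m - 1 <= \sum_(e in A') w e.
  rewrite lerBlDl; apply: le_trans (brownA m mA) _; rewrite lerD2l.
  rewrite (eq_bigl (fun e => (e \in A') && (w e < w m))); last first.
    by move=> e; rewrite !inE; case: eqP => [->|]; rewrite ?ltxx ?andbF.
  rewrite [leRHS](bigID (fun e => w e < w m)) /= lerDl.
  by apply: sumr_ge0 => e /andP[/w_ge0'].
move=> /andP[z_ge0 z_le].
have [z_small|z_large] := leP z (\sum_(e in A') w e).
  have [B BA' ->] := IH' z (andb_true_intro (conj z_ge0 z_small)).
  by exists B => //; apply: subset_trans BA' (subsetDl _ _).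
have [B BA' zB] : exists2 B : {set T}, B \subset A' & z - w m = \sum_(e in B) w e.
  by apply: IH'; apply/andP; split; [lia | rewrite lerBlDl -sumA].
exists (m |: B); first by rewrite subUset sub1set mA (subset_trans BA') ?subsetDl.
rewrite big_setU1 /= -?zB; first by ring.
by apply/negP => /(subsetP BA'); rewrite setD11.
Qed.

Lemma interval_weights_brown (A : {set T}) (k : nat) :
  (forall e, e \in A -> 1 <= w e <= k%:Z) ->
  (forall v, 1 <= v <= k%:Z -> exists2 e, e \in A & w e = v) ->
  brown_condition A.
Proof.
move=> w_bnd w_onto e eA; rewrite -lerBlDl.
have w_ge0 e' : e' \in A -> 0 <= w e' by move/w_bnd/andP => [/(le_trans _)->].
have [le0|gt0] := lerP (w e - 1) 0.
  by apply: le_trans le0 _; apply: sumr_ge0 => e' /andP[/w_ge0].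
have /andP[_ wek] := w_bnd e eA.
have [e' e'A we'] := w_onto (w e - 1) ltac:(lia).
rewrite (bigD1 e') /= ?e'A ?we' ?gtrBl ?ltr01 // lerDl.
by apply: sumr_ge0 => e'' /andP[/andP[/w_ge0]].
Qed.

End SubsetSums.

Section PermutedProducts.
Variable n : nat.
Implicit Types (f : {perm 'I_n}) (e : {set 'I_n}) (E : {set {set 'I_n}}).

Lemma imset_perm1 e : (1%g : {perm 'I_n}) @: e = e.
Proof. by rewrite (eq_imset _ (g := id)) ?imset_id // => x; rewrite perm1. Qed.

Lemma imset_permK f : cancel (fun e => f @: e) (fun e => f^-1%g @: e).
Proof.
move=> e; rewrite -imset_comp (eq_imset _ (g := id)) ?imset_id // => x /=.
by rewrite permK.
Qed.

Lemma imset_perm_twosets f e : (f @: e \in twosets n) = (e \in twosets n).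
Proof. by rewrite !inE card_imset //; apply: perm_inj. Qed.

Lemma twosets_imset_perm f :
  [set f @: e | e : {set 'I_n} in twosets n] = twosets n.
Proof.
apply/eqP; rewrite eqEcard card_imset ?leqnn ?andbT; last exact/imset_inj/perm_inj.
by apply/subsetP => _ /imsetP[e et ->]; rewrite imset_perm_twosets.
Qed.

Lemma wsum_wprodC (H G : wgraph n) f : wsum (wprod H G f) = wsum (wprod G H f^-1).
Proof.
rewrite /wsum /wprod [RHS](reindex_inj (imset_inj (@perm_inj _ f))) /=.
apply: eq_big => [e | e _]; first by rewrite imset_perm_twosets.
by rewrite imset_permK mulrC.
Qed.

Lemma wsum_wprod_Igraph E (G : wgraph n) f : E \subset twosets n ->
  wsum (wprod (Igraph E) G f) = \sum_(e in [set f @: e | e : {set 'I_n} in E]) G e.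
Proof.
move=> /setIidPr Esub; rewrite big_imset /=; last first.
  by move=> e1 e2 _ _; apply/imset_inj/perm_inj.
rewrite /wsum /wprod /Igraph (big_setID E) Esub /= [X in _ + X]big1 ?addr0.
  by apply: eq_bigr => e ->; rewrite mul1r.
by move=> e /setDP[_ /negbTE ->]; rewrite mul0r.
Qed.

End PermutedProducts.

Section OneEdge.
Variables (n : nat) (hn : (2 <= n)%N).

Let i0 : 'I_n := Ordinal (ltnW hn).
Let i1 : 'I_n := Ordinal hn.
Let e01 : {set 'I_n} := [set i0; i1].

Lemma one_edgeE : one_edge n = [set e01].
Proof.
apply/setP => e; rewrite !inE; apply/andP/eqP => [[/eqP e2 /forall_inP e_lt2] | ->].
  apply/eqP; rewrite eqEcard cards2 e2 andbT; apply/subsetP => i ie.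
  by have := e_lt2 _ ie; rewrite !inE; case: i {ie} => [[|[|m]] ?].
by rewrite cards2; split=> //; apply/forall_inP => i; rewrite !inE => /orP[] /eqP ->.
Qed.

Lemma e01_twosets : e01 \in twosets n.
Proof. by rewrite inE cards2. Qed.

Lemma twosets_perm_e01 e : e \in twosets n -> exists f : {perm 'I_n}, e = f @: e01.
Proof.
rewrite inE => /cards2P[a [b [ab ->]]].
pose p := tperm i0 a; have p1a : p i1 != a.
  by rewrite -[a in _ != a](tpermL i0) (inj_eq perm_inj).
exists (p * tperm (p i1) b)%g.
by rewrite imsetU1 imset_set1 !permM tpermL tpermL tpermD // eq_sym.
Qed.

Lemma wsum_one_edge (G : wgraph n) f :
  wsum (wprod G (Igraph (one_edge n)) f) = G (f^-1%g @: e01).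
Proof.
rewrite wsum_wprodC wsum_wprod_Igraph one_edgeE ?sub1set ?e01_twosets //.
by rewrite imset_set1 big_set1.
Qed.

Lemma sprod_one_edge (G : wgraph n) z :
  sprod G (Igraph (one_edge n)) z <-> exists2 e, e \in twosets n & z = G e.
Proof.
split=> [[f ->] | [e /twosets_perm_e01[f ->] ->]].
  rewrite wsum_one_edge; exists (f^-1%g @: e01) => //.
  by rewrite imset_perm_twosets e01_twosets.
by exists f^-1%g; rewrite wsum_one_edge invgK.
Qed.

End OneEdge.

Theorem mainTheorem12 (n : nat) (hn : (2 <= n)%N) (G : wgraph n) (k : nat)
  (hk : (1 <= k)%N)
  (hG : forall z : int, sprod G (Igraph (one_edge n)) z <-> (1 <= z <= k%:Z))
  (l : int) (hl : sprod (Igraph (twosets n)) G l) :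
  forall z : int,
    (exists E : {set {set 'I_n}}, E \subset twosets n /\ sprod (Igraph E) G z)
    <-> (0 <= z <= l).
Proof.
have weightsE z : (exists2 e, e \in twosets n & z = G e) <-> 1 <= z <= k%:Z.
  by rewrite -hG sprod_one_edge.
have G_bnd e : e \in twosets n -> 1 <= G e <= k%:Z.
  by move=> et; apply/weightsE; exists e.
have G_onto v : 1 <= v <= k%:Z -> exists2 e, e \in twosets n & G e = v.
  by case/weightsE => e et ->; exists e.
have G_ge0 e : e \in twosets n -> 0 <= G e by move/G_bnd/andP => [/(le_trans _)->].
have lE : l = \sum_(e in twosets n) G e.
  by case: hl => f ->; rewrite wsum_wprod_Igraph // twosets_imset_perm.
move=> z; split.
  case=> E [Esub [f ->]]; rewrite wsum_wprod_Igraph // lE.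
  have fEsub : [set f @: e | e : {set 'I_n} in E] \subset twosets n.
    by rewrite -(twosets_imset_perm f) imsetS.
  apply/andP; split; last exact: sum_subset_le.
  by apply: sumr_ge0 => e /(subsetP fEsub)/G_ge0.
have brownG := interval_weights_brown G_bnd G_onto.
rewrite lE => /(brown_subset_sums G_ge0 brownG) [E Esub ->].
exists E; split=> //; exists 1%g.
by rewrite wsum_wprod_Igraph // (eq_imset _ (@imset_perm1 n)) imset_id.
Qed.
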